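(* For all integers $n,d,k\ge0$, $T(n,\omega^d\cdot k)\le P(n,\omega^d\cdot k)$.
   Context: $[c]=\{1,\dots,c\}$; ordinals are identified with sets of smaller ordinals; $\approx$ is order-equivalence; $\binom{S}{n}$ is the set of $n$-element subsets. $T(n,S)$ is the least $t\in\mathbb{N}$ such that for every $c\ge1$ and every $\mathrm{COL}:\binom{S}{n}\to[c]$ there is $S'\subseteq S$, $S'\approx S$, with $|\mathrm{COL}(\binom{S'}{n})|\le t$ ($\infty$ if none). Every $\beta<\omega^d\cdot k$ is uniquely $\omega^d b+\sum_{j<d}\omega^j a_j$ with $0\le b<k$, $a_j\in\mathbb{N}$. A coloring rule (CR) on $\binom{\omega^d\cdot k}{n}$ is a pair $(\mathcal{Y},\preceq)$ with $\mathcal{Y}:\{1,\dots,n\}\to\{0,\dots,k-1\}$ and $\preceq$ a total preorder on $I=\{(i,j):1\le i\le n,0\le j<d\}$ (with induced equivalence $\equiv$ and strict part $\prec$) such that: (1) if $d\ge1$, $(i,0)\prec(i',0)$ for $i<i'$; if $d=0$, $\mathcal{Y}(i)<\mathcal{Y}(i')$ for $i<i'$; (2) $(i,j)\equiv(i',j)$ for some $j$ implies $\mathcal{Y}(i)=\mathcal{Y}(i')$; (3) $(i,j)\prec(i,j')$ for $j>j'$; (4) $(i,j)\equiv(i',j')$ implies $j=j'$; (5) for $j>0$, $(i,j)\not\equiv(i',j)$ implies $(i,j-1)\not\equiv(i',j-1)$. $P(n,\omega^d\cdot k)$ is the total number of CRs on $\binom{\omega^d\cdot k}{n}$. *)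

From mathcomp Require Import all_boot.
From mathcomp Require Import finmap.
Set Implicit Arguments. Unset Strict Implicit. Unset Printing Implicit Defensive.
Local Open Scope fset_scope.

(* The ordinal omega^d * k, via Cantor normal form: beta =
   omega^d b + sum_{j<d} omega^j a_j  is encoded as (b, a) with b < k. *)
Definition Ord (d k : nat) := ('I_k * {ffun 'I_d -> nat})%type.

Definition ord_lt (d k : nat) (x y : Ord d k) : bool :=
  (x.1 < y.1) ||
  ((x.1 == y.1) &&
   [exists j : 'I_d, (x.2 j < y.2 j) &&
      [forall j' : 'I_d, (j < j') ==> (x.2 j' == y.2 j')]]).

Definition order_equiv_full (d k : nat) (S' : Ord d k -> Prop) : Prop :=
  exists g : Ord d k -> Ord d k,
    [/\ forall x, S' (g x),
        forall y, S' y -> exists x, g x = y,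
        injective g &
        forall x y, ord_lt x y <-> ord_lt (g x) (g y)].

(* "T(n, omega^d*k) <= t" holds iff this property holds for t
   (it is monotone in t). *)
Definition T_good (n d k t : nat) : Prop :=
  forall (c : nat) (COL : {fset Ord d k} -> nat),
    1 <= c ->
    (forall A : {fset Ord d k}, #|` A| = n -> 1 <= COL A <= c) ->
    exists S' : Ord d k -> Prop,
      order_equiv_full S' /\
      exists L : {fset nat},
        #|` L| <= t /\
        forall A : {fset Ord d k},
          #|` A| = n -> (forall x, x \in A -> S' x) -> COL A \in L.

(* T(n, omega^d*k) <= m  (T may be infinite, in which case this fails). *)
Definition T_le (n d k m : nat) : Prop := exists t, t <= m /\ T_good n d k t.

(* Coloring rules.  Index i in {1..n} is represented by 'I_n (i-1),
   the set I = {(i,j)} by 'I_n * 'I_d; the total preorder by a relation r. *)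
Definition CRdata (n d k : nat) :=
  ({ffun 'I_n -> 'I_k} * {ffun ('I_n * 'I_d) * ('I_n * 'I_d) -> bool})%type.

Definition isCR (n d k : nat) (p : CRdata n d k) : bool :=
  let Y := p.1 in
  let r := fun x y : 'I_n * 'I_d => p.2 (x, y) in
  let eqv := fun x y => r x y && r y x in
  let prec := fun x y => r x y && ~~ r y x in
  [&&
      [forall x, forall y, r x y || r y x],
      [forall x, forall y, forall z, r x y ==> r y z ==> r x z],
      (if 0 < d then
         [forall i : 'I_n, forall i' : 'I_n, forall j : 'I_d,
            ((j : nat) == 0) ==> (i < i') ==> prec (i, j) (i', j)]
       else [forall i : 'I_n, forall i' : 'I_n, (i < i') ==> (Y i < Y i')]),
      [forall i : 'I_n, forall i' : 'I_n, forall j : 'I_d,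
         eqv (i, j) (i', j) ==> (Y i == Y i')],
      [forall i : 'I_n, forall j : 'I_d, forall j' : 'I_d,
         (j' < j) ==> prec (i, j) (i, j')],
      [forall x, forall y, eqv x y ==> (x.2 == y.2)] &
      [forall i : 'I_n, forall i' : 'I_n, forall j : 'I_d, forall j1 : 'I_d,
         ((j1 : nat).+1 == j) ==> ~~ eqv (i, j) (i', j) ==> ~~ eqv (i, j1) (i', j1)]].

Definition Pcount (n d k : nat) : nat := #|[pred p : CRdata n d k | isCR p]|.

(* Given a strictly increasing
   h : nat -> nat, send omega^d b + sum_j omega^j a_j to the point with the same
   b whose coefficient at omega^j is h (code [:: a_j; ...; a_(d-1); b]), where
   code is an injective coding of sequences that increases with the first entry
   and when an entry is prepended; this is an order embedding of omega^d*k into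
   itself.  For an n-set A in its image, listed by increasing 0-th coefficient,
   the comparisons among the n*d coefficients of A form a coloring rule p, and A
   is determined by p together with the increasing list of its coefficient
   values, a list of length m(p) (the number of classes of p) with entries in
   the range of h.  Colour an increasing (n*d)-tuple t by the function sending p
   to the COL-colour of the set with rule p and values t_1 < ... < t_m(p).  The
   infinite Ramsey theorem gives an h on whose range this colouring is constant;
   then COL A depends on p alone, so at most P(n, omega^d*k) colours occur. *)

From mathcomp Require Import all_boot.
From mathcomp Require Import finmap.
From mathcomp Require Import zify.
From Stdlib Require Import Classical ClassicalEpsilon.
Set Implicit Arguments. Unset Strict Implicit. Unset Printing Implicit Defensive.
Local Open Scope fset_scope.

(** * Ramsey's theorem for increasing sequences of naturals *)

Lemma unbounded_subseq (P : pred nat) :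
  (forall N, exists t, (N <= t) && P t) ->
  exists2 e : nat -> nat, {homo e : i j / i < j} & forall i, P (e i).
Proof.
move=> unbP; pose ch N := xchoose (unbP N).
have chP N : N <= ch N /\ P (ch N) by apply/andP/(xchooseP (unbP N)).
pose e i := iter i (fun m => ch m.+1) (ch 0).
exists e => [|[|i]]; try exact: (chP _).2.
by apply: homo_ltn ltn_trans _ => i; exact: (chP (e i).+1).1.
Qed.

Lemma sorted_preim (h : nat -> nat) w : {homo h : i j / i < j} ->
  sorted ltn w -> (forall u, u \in w -> exists t, h t = u) ->
  exists2 s, sorted ltn s & map h s = w.
Proof.
move=> hS w_sorted w_range.
have [s sE] : exists s, map h s = w.
  elim: w w_range {w_sorted} => [|u w IHw] range; first by exists [::].
  have [t <-] := range u (mem_head _ _).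
  have [|s <-] := IHw; first by move=> v vw; apply: range; rewrite inE vw orbT.
  by exists (t :: s).
by exists s; rewrite // -(mono_sorted (leqW_mono (leq_mono hS))) sE.
Qed.

Lemma sorted_ltn_extend s M : sorted ltn s -> size s <= M ->
  exists s', [/\ sorted ltn s', size s' = M & take (size s) s' = s].
Proof.
move=> s_sorted sM; exists (s ++ iota (last 0 s).+1 (M - size s)); split.
- case: s s_sorted {sM} => [|a s] /=; first by rewrite iota_ltn_sorted.
  rewrite cat_path => ->; case: (M - _) => //= m.
  by rewrite ltnSn; exact: (iota_ltn_sorted _ m.+1).
- by rewrite size_cat size_iota subnKC.
- exact: take_size_cat.
Qed.

Section Ramsey.
Variable T : finType.

Lemma infinite_pigeonhole (a : nat -> T) :
  exists x, exists2 e : nat -> nat, {homo e : i j / i < j} & forall i, a (e i) = x.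
Proof.
have [[x infx]|noinf] := classic (exists x, forall N, exists t, (N <= t) && (a t == x)).
  by have [e eS ex] := unbounded_subseq infx; exists x, e => // i; apply/eqP.
have bounded x : exists N, forall t, N <= t -> a t != x.
  have [N NP] := not_all_ex_not _ _ (not_ex_all_not _ _ noinf x).
  by exists N => t Nt; apply/eqP => atx; apply: NP; exists t; rewrite Nt atx /=.
have [N NP] := choice _ bounded.
pose m := \max_x N x.
by have := NP (a m) m (leq_bigmax (a m)); rewrite eqxx.
Qed.

Definition homogeneous M (f : seq nat -> T) (h : nat -> nat) (col : T) :=
  forall s, sorted ltn s -> size s = M -> f (map h s) = col.

Lemma ramsey_prehomogeneous M (f : seq nat -> T) :
  (forall g, exists h col, {homo h : i j / i < j} /\ homogeneous M g h col) ->
  exists (p : nat -> nat) (col : nat -> T), {homo p : i j / i < j} /\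
    forall a s, sorted ltn (a :: s) -> size s = M -> f (map p (a :: s)) = col a.
Proof.
move=> IH.
have /choice[sel selP] g : exists hc, {homo hc.1 : i j / i < j} /\ homogeneous M g hc.1 hc.2.
  by have [h [col hcol]] := IH g; exists (h, col).
(* [st i.+1] is a subsequence of the tail of [st i] on which the colour of a
   tuple headed by [st i 0] does not depend on the rest of the tuple. *)
pose rest (g : nat -> nat) s := f (g 0 :: map (g \o succn) s).
pose next (g : nat -> nat) := g \o succn \o (sel (rest g)).1.
pose st i := iter i next id.
have stS i : {homo st i : a b / a < b}.
  elim: i => [//|i IHi] a b ab /=; apply/IHi; rewrite ltnS.
  by have [+ _] := selP (rest (st i)); apply.
have st_range i j t : i <= j -> exists u, st i u = st j t.
  elim: j t => [|j IHj] t; first by rewrite leqn0 => /eqP->; exists t.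
  rewrite leq_eqVlt => /orP[/eqP->|]; first by exists t.
  by rewrite ltnS => /IHj; apply.
pose p i := st i 0.
have pS : {homo p : i j / i < j} by apply: homo_ltn ltn_trans _ => i; apply: stS.
exists p, (fun i => (sel (rest (st i))).2); split => // a s as_sorted size_s.
have [s2 s2_sorted s2E] : exists2 s2, sorted ltn s2 & map (st a.+1) s2 = map p s.
  apply: (sorted_preim (stS _)); first exact: homo_sorted pS _ (path_sorted as_sorted).
  move=> _ /mapP[b bs ->]; apply: st_range.
  by move/allP: (order_path_min ltn_trans as_sorted); apply.
have size_s2 : size s2 = M by rewrite -size_s -(size_map (st a.+1)) s2E size_map.
have [_ homog] := selP (rest (st a)).
by rewrite /= -s2E -(homog s2 s2_sorted size_s2) /rest -map_comp.
Qed.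

Theorem ramsey M (f : seq nat -> T) :
  exists h col, {homo h : i j / i < j} /\ homogeneous M f h col.
Proof.
elim: M f => [|M IH] f.
  by exists id, (f [::]); split=> // s _ /size0nil ->.
have [p [c [pS pc]]] := @ramsey_prehomogeneous M f IH.
have [x [e eS ex]] := infinite_pigeonhole c.
exists (p \o e), x; split=> [i j /eS/pS //|[//|a s] as_sorted [size_s]].
have eas_sorted : sorted ltn (e a :: map e s) := homo_sorted eS (a :: s) as_sorted.
by rewrite map_comp -(ex a) -(pc _ (map e s)) ?size_map.
Qed.

End Ramsey.

(** * An order embedding of omega^d * k into itself *)

Fixpoint code (s : seq nat) : nat :=
  if s is t :: s' then 2 ^ code s' * t.*2.+1 else 0.

Lemma pow2_odd_inj a b t u : 2 ^ a * t.*2.+1 = 2 ^ b * u.*2.+1 -> a = b /\ t = u.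
Proof.
elim: a b => [|a IHa] [|b]; rewrite ?expnS ?mul1n -?mulnA; try lia.
by move/eqP; rewrite eqn_pmul2l // => /eqP/IHa[-> ->].
Qed.

Lemma code_inj : injective code.
Proof.
elim=> [|t s IHs] [|u s'] //=.
- by move=> /esym/eqP; rewrite muln_eq0 expn_eq0.
- by move=> /eqP; rewrite muln_eq0 expn_eq0.
- by case/pow2_odd_inj => /IHs -> ->.
Qed.

Lemma code_behead_lt t s : code s < code (t :: s).
Proof. exact: leq_trans (ltn_expl _ (ltnSn 1)) (leq_pmulr _ _). Qed.

Lemma code_head_lt t t' s : t < t' -> code (t :: s) < code (t' :: s).
Proof. by move=> tt'; rewrite /= ltn_pmul2l ?expn_gt0 // ltnS ltn_double. Qed.

Section OrdinalEmbedding.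
Variables d k : nat.
Implicit Types x y z : Ord d k.

Definition coef x (t : nat) : nat :=
  if (insub t : option 'I_d) is Some j then x.2 j else if t == d then val x.1 else 0.

Lemma coefE x (j : 'I_d) : coef x j = x.2 j.
Proof. by rewrite /coef valK. Qed.

Lemma coef_top x : coef x d = x.1.
Proof. by rewrite /coef insubN ?ltnn ?eqxx. Qed.

Definition tail j x : seq nat := [seq coef x t | t <- iota j (d.+1 - j)].

Lemma tail_cons j x : j <= d -> tail j x = coef x j :: tail j.+1 x.
Proof. by move=> jd; rewrite /tail subSn. Qed.

Lemma size_tail j x : size (tail j x) = d.+1 - j.
Proof. by rewrite size_map size_iota. Qed.

Lemma eq_tail j x y : (forall t, j <= t <= d -> coef x t = coef y t) -> tail j x = tail j y.
Proof.
move=> eq_coef; apply/eq_in_map => t; rewrite mem_iota => /andP[jt td].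
by apply: eq_coef; rewrite jt /=; lia.
Qed.

Lemma nth_tail j x t : j + t <= d -> nth 0 (tail j x) t = coef x (j + t).
Proof. by move=> jtd; rewrite (nth_map 0) ?nth_iota ?size_iota //; lia. Qed.

Lemma tail_inj_fst j x y : j <= d -> tail j x = tail j y -> x.1 = y.1.
Proof.
move=> jd /(congr1 (nth 0 ^~ (d - j))); rewrite !nth_tail ?subnKC // !coef_top.
exact: val_inj.
Qed.

Lemma tail0_inj : injective (tail 0).
Proof.
move=> x y eq_xy; have eq1 := tail_inj_fst (leq0n d) eq_xy.
have eq2 : x.2 = y.2.
  apply/ffunP => j; have jd : 0 + j <= d by rewrite add0n ltnW.
  by have := congr1 (nth 0 ^~ j) eq_xy; rewrite !nth_tail // add0n !coefE.
by rewrite [x]surjective_pairing [y]surjective_pairing eq1 eq2.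
Qed.

Lemma code_tail_lt x j j' : j' < j -> j <= d -> code (tail j x) < code (tail j' x).
Proof.
elim: j => // j IHj; rewrite ltnS => j'j jd.
apply: (@leq_trans (code (tail j x))); first by rewrite (tail_cons x (ltnW jd)) code_behead_lt.
by case: ltngtP j'j => // [/IHj/(_ (ltnW jd))/ltnW|->].
Qed.

Lemma ord_lt_irr x : ord_lt x x = false.
Proof. by rewrite /ord_lt ltnn eqxx /=; apply/existsP => -[j]; rewrite ltnn. Qed.

Lemma ord_lt_asym x y : ord_lt x y -> ord_lt y x = false.
Proof.
rewrite /ord_lt => /orP[lt1|/andP[/eqP eq1 /existsP[j /andP[ltj /forallP above]]]].
  by rewrite ltnNge (ltnW lt1) /=; case: eqP lt1 => // ->; rewrite ltnn.
rewrite eq1 ltnn eqxx /=; apply/existsP => -[j' /andP[ltj' /forallP above']].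
case: (ltngtP j j') => [jj'|j'j|/val_inj eqj].
- by move/implyP: (above j') => /(_ jj')/eqP eqj'; rewrite eqj' ltnn in ltj'.
- by move/implyP: (above' j) => /(_ j'j)/eqP eqj; rewrite eqj ltnn in ltj.
- by subst j'; move: (ltn_trans ltj ltj'); rewrite ltnn.
Qed.

Lemma ord_lt_total x y : x != y -> ord_lt x y || ord_lt y x.
Proof.
move=> neq_xy; rewrite /ord_lt.
case: (ltngtP x.1 y.1) => [//|_|/val_inj eq1]; first by rewrite orbT.
have eqb1 : x.1 == y.1 by apply/eqP.
rewrite eqb1 eq_sym eqb1 /=.
have [j0 neq_j0] : exists j0, x.2 j0 != y.2 j0.
  apply/existsP; apply: contraR neq_xy => /existsPn same.
  rewrite [x]surjective_pairing [y]surjective_pairing eq1; apply/eqP; congr pair.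
  by apply/ffunP => j; apply/eqP; move: (same j); rewrite negbK.
have [j neq_j top_j] := @arg_maxnP _ j0 (fun j => x.2 j != y.2 j) val neq_j0.
have above : [forall j' : 'I_d, (j < j') ==> (x.2 j' == y.2 j')].
  apply/forallP => j'; apply/implyP => jj'; apply: contraTT jj' => /top_j.
  by rewrite /= -leqNgt.
case: (ltngtP (x.2 j) (y.2 j)) neq_j => // [lt_j|gt_j] _; apply/orP; [left|right].
  by apply/existsP; exists j; rewrite lt_j.
apply/existsP; exists j; rewrite gt_j /=; apply/forallP => j'.
by apply/implyP => jj'; apply/eqP/esym/eqP; exact: (implyP (forallP above j') jj').
Qed.

Lemma ord_lt_image_equiv (g : Ord d k -> Ord d k) :
  {homo g : x y / ord_lt x y} -> order_equiv_full (fun y => exists x, g x = y).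
Proof.
move=> gS; have g_mono : {mono g : x y / ord_lt x y}.
  move=> x y; apply/idP/idP => [lt_gxy|/gS //].
  case: (eqVneq x y) => [eq_xy|/ord_lt_total/orP[//|/gS lt_gyx]].
    by rewrite eq_xy ord_lt_irr in lt_gxy.
  by rewrite (ord_lt_asym lt_gxy) in lt_gyx.
exists g; split=> [x|y [x <-]|x y eq_gxy|x y]; [by exists x|by exists x| |by rewrite g_mono].
apply/eqP; apply: contraT => /ord_lt_total/orP[]/gS; by rewrite eq_gxy ord_lt_irr.
Qed.

(* Condition (1) of a coloring rule lists the points of a set by increasing
   0-th coefficient (by increasing [b] when [d = 0]). *)
Definition key x : nat := if d == 0 then val x.1 else coef x 0.

Definition embed (h : nat -> nat) x : Ord d k :=
  (x.1, [ffun j : 'I_d => h (code (tail j x))]).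

Lemma tail_eq_above x y (j : 'I_d) t : x.1 = y.1 ->
  (forall j' : 'I_d, j < j' -> x.2 j' = y.2 j') -> j < t -> tail t x = tail t y.
Proof.
move=> eq1 eq2 jt; apply: eq_tail => u /andP[tu ud].
case: (ltngtP u d) ud => // [lt_ud|->] _; last by rewrite !coef_top eq1.
by rewrite -[u]/(val (Ordinal lt_ud)) !coefE eq2 //= (leq_trans jt).
Qed.

Section Embed.
Variable h : nat -> nat.
Hypothesis hS : {homo h : a b / a < b}.

Lemma embed_coord x (j : 'I_d) : (embed h x).2 j = h (code (tail j x)).
Proof. by rewrite ffunE. Qed.

Lemma embed_lt : {homo embed h : x y / ord_lt x y}.
Proof.
move=> x y; rewrite /ord_lt /= => /orP[-> //|/andP[eq1 /existsP[j /andP[ltj above]]]].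
have {}eq1 : x.1 = y.1 by apply/eqP.
have {}above (j' : 'I_d) : j < j' -> x.2 j' = y.2 j'.
  by move=> jj'; apply/eqP/(implyP (forallP above j')).
have eq_tail_above := tail_eq_above eq1 above.
apply/orP; right; rewrite eq1 (eqxx y.1) /=; apply/existsP; exists j.
rewrite !embed_coord (tail_cons x (ltnW (ltn_ord j))) (tail_cons y (ltnW (ltn_ord j))).
rewrite eq_tail_above // hS ?code_head_lt ?coefE //=.
by apply/forallP => j'; apply/implyP => jj'; rewrite !embed_coord eq_tail_above.
Qed.

Lemma embed_order_equiv : order_equiv_full (fun y => exists x, embed h x = y).
Proof. exact/ord_lt_image_equiv/embed_lt. Qed.

Lemma embed_coord_inj x y j j' :
  (embed h x).2 j = (embed h y).2 j' -> tail j x = tail j' y.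
Proof. by rewrite !embed_coord => /(incn_inj (leq_mono hS))/code_inj. Qed.

Lemma embed_coord_lt x (j j' : 'I_d) : j' < j -> (embed h x).2 j < (embed h x).2 j'.
Proof. by move=> j'j; rewrite !embed_coord hS // code_tail_lt // ltnW. Qed.

Lemma key_embed_inj x y : key (embed h x) = key (embed h y) -> embed h x = embed h y.
Proof.
rewrite /key; case: eqP => [d0 /val_inj /= eq1|/eqP]; last rewrite -lt0n => d_gt0.
  rewrite /embed eq1; congr pair; apply/ffunP => j.
  by have := leq_trans (ltn_ord j) (eq_leq d0).
have -> : 0 = Ordinal d_gt0 :> nat by [].
by rewrite !coefE => /embed_coord_inj/tail0_inj ->.
Qed.

End Embed.

End OrdinalEmbedding.

(** * Coloring rules of n-element sets *)

Section Pattern.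
Variables n d k : nat.

Definition pattern (Y : 'I_n -> 'I_k) (v : 'I_n * 'I_d -> nat) : CRdata n d k :=
  ([ffun i => Y i], [ffun qq => v qq.1 <= v qq.2]).

Lemma pattern_isCR (Y : 'I_n -> 'I_k) (v : 'I_n * 'I_d -> nat) :
  (if 0 < d
   then forall (i i' : 'I_n) (j : 'I_d), j = 0 :> nat -> i < i' -> v (i, j) < v (i', j)
   else forall i i' : 'I_n, i < i' -> Y i < Y i') ->
  (forall i i' j, v (i, j) = v (i', j) -> Y i = Y i') ->
  (forall i (j j' : 'I_d), j' < j -> v (i, j) < v (i, j')) ->
  (forall q q', v q = v q' -> q.2 = q'.2) ->
  (forall (i i' : 'I_n) (j j1 : 'I_d),
     j1.+1 = j -> v (i, j1) = v (i', j1) -> v (i, j) = v (i', j)) ->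
  isCR (pattern Y v).
Proof.
move=> v_lt0 v_eq_fst v_lt_lower v_eq_level v_eq_succ.
have eqv q q' : (v q <= v q') && (v q' <= v q) = (v q == v q') by rewrite eqn_leq.
have prec q q' : (v q <= v q') && ~~ (v q' <= v q) = (v q < v q').
  by rewrite -ltnNge andb_idl // => /ltnW.
rewrite /isCR /=; repeat (apply/andP; split).
- by apply/forallP => q; apply/forallP => q'; rewrite !ffunE leq_total.
- apply/forallP => q; apply/forallP => q'; apply/forallP => q''; rewrite !ffunE.
  by apply/implyP => le1; apply/implyP; apply: leq_trans.
- case: ifP v_lt0 => _ lt0.
    do 3 apply/forallP => ?; rewrite !ffunE prec.
    by apply/implyP => /eqP j0; apply/implyP; apply: lt0.
  by do 2 apply/forallP => ?; rewrite !ffunE; apply/implyP; apply: lt0.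
- do 3 apply/forallP => ?; rewrite !ffunE eqv.
  by apply/implyP => /eqP/v_eq_fst ->.
- do 3 apply/forallP => ?; rewrite !ffunE prec.
  by apply/implyP; apply: v_lt_lower.
- do 2 apply/forallP => ?; rewrite !ffunE eqv.
  by apply/implyP => /eqP/v_eq_level ->.
- do 4 apply/forallP => ?; rewrite !ffunE !eqv.
  apply/implyP => /eqP j1j; apply/implyP; apply: contra => /eqP.
  by move/(v_eq_succ _ _ _ _ j1j) => ->.
Qed.

End Pattern.

Lemma eqfun_same_order_range (I : Type) (f g : I -> nat) :
  (forall a b, (f a <= f b) = (g a <= g b)) ->
  (forall a, exists b, f a = g b) -> (forall b, exists a, g b = f a) -> f =1 g.
Proof.
suff le_gf (f1 g1 : I -> nat) : (forall a b, (f1 a <= f1 b) = (g1 a <= g1 b)) ->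
    (forall a, exists b, f1 a = g1 b) -> forall a, g1 a <= f1 a.
  by move=> fg f_in g_in a; apply/eqP; rewrite eqn_leq !le_gf // => ? ?; rewrite fg.
move=> fg f_in a; elim: {a}(f1 a) {-2}a (leqnn (f1 a)) => [|m IHm] a fa_le;
  rewrite leqNgt; apply/negP => lt_fg; have [b fab] := f_in a;
  have lt_ba : f1 b < f1 a by rewrite ltnNge fg -ltnNge -fab.
  by move: fa_le lt_ba; rewrite leqn0 => /eqP->.
by have := IHm b (leq_trans lt_ba fa_le); rewrite -fab leqNgt lt_ba.
Qed.

Lemma eq_size_undup_map (I T1 T2 : eqType) (f : I -> T1) (g : I -> T2) s :
  (forall a b, (f a == f b) = (g a == g b)) ->
  size (undup (map f s)) = size (undup (map g s)).
Proof.
move=> fg; elim: s => //= a s IHs.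
have -> : (f a \in map f s) = (g a \in map g s).
  by apply/mapP/mapP => -[b bs /eqP]; [rewrite fg|rewrite -fg] => /eqP; exists b.
by case: ifP => //=; rewrite IHs.
Qed.

Section Profile.
Variables n d k : nat.
Variable x0 : Ord d k.
Implicit Types (A B : {fset Ord d k}) (xs : seq (Ord d k)).

Definition kenum A : seq (Ord d k) := sort (relpre (@key d k) leq) A.

Definition coords xs (q : 'I_n * 'I_d) : nat := (nth x0 xs q.1).2 q.2.

Definition pat xs : CRdata n d k := pattern (fun i => (nth x0 xs i).1) (coords xs).

Definition values xs : seq nat :=
  sort leq (undup [seq coords xs q | q <- enum {: 'I_n * 'I_d}]).

Definition profile A := (pat (kenum A), values (kenum A)).

Definition nclasses (p : CRdata n d k) : nat :=
  size (undup [seq [ffun q' => p.2 (q, q')] | q <- enum {: 'I_n * 'I_d}]).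

Lemma size_kenum A : size (kenum A) = #|` A|.
Proof. exact: size_sort. Qed.

Lemma mem_kenum A : kenum A =i A.
Proof. exact: mem_sort. Qed.

Lemma valuesP xs u : reflect (exists q, u = coords xs q) (u \in values xs).
Proof.
rewrite mem_sort mem_undup; apply: (iffP mapP) => [[q _ ->]|[q ->]]; exists q => //.
by rewrite mem_enum.
Qed.

Lemma values_sorted xs : sorted ltn (values xs).
Proof.
by rewrite ltn_sorted_uniq_leq sort_uniq undup_uniq sort_sorted //; exact: leq_total.
Qed.

Lemma size_values xs : size (values xs) = nclasses (pat xs).
Proof.
rewrite size_sort; apply: eq_size_undup_map => q q' /=.
apply/eqP/eqP => [eq_qq'|/ffunP eq_rows]; first by apply/ffunP => q''; rewrite !ffunE eq_qq'.
move: (eq_rows q) (eq_rows q'); rewrite !ffunE /= !leqnn => /esym le_q'q le_qq'.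
by apply/eqP; rewrite eqn_leq le_qq' le_q'q.
Qed.

Lemma size_values_le xs : size (values xs) <= n * d.
Proof.
by rewrite size_sort (leq_trans (size_undup _)) // size_map -cardE card_prod !card_ord.
Qed.

Lemma profile_inj A B : #|` A| = n -> #|` B| = n -> profile A = profile B -> A = B.
Proof.
move=> An Bn eq_profile.
have /= eq_pat := congr1 fst eq_profile; have /= eq_values := congr1 snd eq_profile.
have eq_le q q' : (coords (kenum A) q <= coords (kenum A) q') =
                  (coords (kenum B) q <= coords (kenum B) q').
  by have := congr1 (fun p : CRdata n d k => p.2 (q, q')) eq_pat; rewrite !ffunE.
have eq_coords : coords (kenum A) =1 coords (kenum B).
  apply: eqfun_same_order_range eq_le _ _ => q.
    by apply/valuesP; rewrite -eq_values; apply/valuesP; exists q.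
  by apply/valuesP; rewrite eq_values; apply/valuesP; exists q.
have eq_kenum : kenum A = kenum B.
  apply: (@eq_from_nth _ x0) => [|i]; first by rewrite !size_kenum An Bn.
  rewrite size_kenum An => lt_in.
  have := congr1 (fun p : CRdata n d k => p.1 (Ordinal lt_in)) eq_pat; rewrite !ffunE => eq1.
  rewrite [nth x0 _ i]surjective_pairing [nth x0 (kenum B) i]surjective_pairing eq1.
  by congr pair; apply/ffunP => j; exact: (eq_coords (Ordinal lt_in, j)).
by apply/fsetP => x; rewrite -!mem_kenum eq_kenum.
Qed.

Lemma key_kenum_lt A (i i' : nat) : {in A &, injective (@key d k)} ->
  i < i' -> i' < #|` A| -> key (nth x0 (kenum A) i) < key (nth x0 (kenum A) i').
Proof.
move=> key_inj ii' i'A.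
have key_sorted : sorted ltn (map (@key d k) (kenum A)).
  rewrite ltn_sorted_uniq_leq map_inj_in_uniq ?sort_uniq ?fset_uniq //=.
    by rewrite sorted_map sort_sorted // => x y; exact: leq_total.
  by move=> x y; rewrite !mem_kenum; exact: key_inj.
rewrite -!(nth_map x0 (key x0)) ?size_kenum ?(ltn_trans ii') //.
by apply: (sorted_ltn_nth ltn_trans) => //; rewrite inE size_map size_kenum ?(ltn_trans ii').
Qed.

Section EmbeddedSet.
Variables (h : nat -> nat) (A : {fset Ord d k}).
Hypothesis An : #|` A| = n.
Hypothesis A_img : forall x, x \in A -> exists z, embed h z = x.

Lemma nth_kenum_embed (i : 'I_n) : exists z, embed h z = nth x0 (kenum A) i.
Proof. by apply: A_img; rewrite -mem_kenum mem_nth // size_kenum An. Qed.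

Lemma values_kenum_range u : u \in values (kenum A) -> exists t, h t = u.
Proof.
case/valuesP=> -[i j] ->; rewrite /coords /=; have [z <-] := nth_kenum_embed i.
by exists (code (tail j z)); rewrite ffunE.
Qed.

Lemma pat_kenum_isCR : {homo h : a b / a < b} -> isCR (pat (kenum A)).
Proof.
move=> hS; have img := nth_kenum_embed.
have key_lt (i i' : 'I_n) : i < i' -> key (nth x0 (kenum A) i) < key (nth x0 (kenum A) i').
  move=> ii'; apply: key_kenum_lt ii' _; last by rewrite An.
  by move=> x y /A_img[z <-] /A_img[z' <-]; exact: key_embed_inj.
apply: pattern_isCR; rewrite /coords.
- case: ifP => [d_gt0 i i' j /= j0 ii'|/negbT d_le0 i i' ii'].
    by have := key_lt i i' ii'; rewrite /key (gtn_eqF d_gt0) -j0 !coefE.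
  by have := key_lt i i' ii'; rewrite /key eqn0Ngt d_le0.
- move=> i i' j /=; have [z <-] := img i; have [z' <-] := img i'.
  by move/(embed_coord_inj hS)/tail_inj_fst; apply; exact: ltnW.
- by move=> i j j' j'j /=; have [z <-] := img i; exact: embed_coord_lt.
- move=> [i j] [i' j'] /=; have [z <-] := img i; have [z' <-] := img i'.
  move/(embed_coord_inj hS)/(congr1 size); rewrite !size_tail => eq_size.
  by apply: val_inj; move: eq_size (ltn_ord j) (ltn_ord j') => /=; lia.
- move=> i i' j j1 j1j /=; have [z <-] := img i; have [z' <-] := img i'.
  move/(embed_coord_inj hS); rewrite !(tail_cons _ (ltnW (ltn_ord j1))) j1j => -[_ eq_tail].
  by rewrite !embed_coord eq_tail.
Qed.

End EmbeddedSet.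

End Profile.

Section Main.
Variables n d k : nat.
Variable x0 : Ord d k.

Definition profile_color (COL : {fset Ord d k} -> nat) (pw : CRdata n d k * seq nat) :=
  epsilon (inhabits 0) (fun c => exists2 A, #|` A| = n /\ profile n x0 A = pw & COL A = c).

Lemma profile_colorE COL A : #|` A| = n -> profile_color COL (profile n x0 A) = COL A.
Proof.
move=> An; rewrite /profile_color; set P := (fun c => _).
have [|B [Bn eq_profile] <-] := epsilon_spec (inhabits 0) P; first by exists (COL A), A.
by rewrite (profile_inj Bn An eq_profile).
Qed.

Lemma T_good_inhabited : T_good n d k (Pcount n d k).
Proof.
move=> c COL _ COL_le.
pose Phi t : {ffun CRdata n d k -> 'I_c.+1} :=
  [ffun p => inord (profile_color COL (p, take (nclasses p) t))].
have [h [col [hS h_homog]]] := ramsey (n * d) Phi.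
exists (fun y => exists z, embed h z = y); split; first exact: embed_order_equiv.
exists [fset val (col p) | p in [pred p : CRdata n d k | isCR p]]; split.
  by apply: leq_trans (leq_imfset_card _ _ _) _; rewrite -cardE.
move=> A An A_img; set xs := kenum A.
have [s s_sorted sE] : exists2 s, sorted ltn s & map h s = values n x0 xs.
  exact: sorted_preim hS (values_sorted n x0 xs) (values_kenum_range An A_img).
have size_s : size s = nclasses (pat n x0 xs) by rewrite -(size_map h) sE size_values.
have s_le : size s <= n * d by rewrite -(size_map h) sE size_values_le.
have [s' [s'_sorted size_s' take_s']] := sorted_ltn_extend s_sorted s_le.
have := congr1 (fun F : {ffun CRdata n d k -> 'I_c.+1} => F (pat n x0 xs))
  (h_homog s' s'_sorted size_s').
rewrite ffunE -size_s -map_take take_s' sE.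
rewrite -[(pat _ _ _, _)]/(profile n x0 A) profile_colorE //.
move=> col_p; rewrite -[COL A](@inordK c) ?ltnS; last by case/andP: (COL_le A An).
by rewrite col_p; apply: in_imfset; exact: pat_kenum_isCR An A_img hS.
Qed.

End Main.

Lemma isCR_nil d k (p : CRdata 0 d k) : isCR p.
Proof.
have no_index (i : 'I_0) : False by case: i.
rewrite /isCR; repeat (apply/andP; split); try case: ifP => _;
  apply/forallP => q; exfalso; first [exact: no_index q | exact: no_index q.1].
Qed.

Lemma T_good_empty n d : T_good n d 0 (Pcount n d 0).
Proof.
move=> c COL _ _; exists (fun _ => True); split.
  by exists id; split=> // y _; exists y.
case: n => [|n].
  exists [fset COL fset0]; split=> [|A A0 _]; last by rewrite (cardfs0_eq A0) inE.
  rewrite cardfs1; apply/card_gt0P.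
  by exists ([ffun i => i], [ffun => true]); rewrite inE isCR_nil.
exists fset0; split=> // A An _.
case: (fset_0Vmem A) => [A0|[[[]]] //]; by move: An; rewrite A0 cardfs0.
Qed.

Theorem theorem9p3 (n d k : nat) : T_le n d k (Pcount n d k).
Proof.
exists (Pcount n d k); split=> //.
case: k => [|k]; first exact: T_good_empty.
exact: (T_good_inhabited (ord0, [ffun => 0])).
Qed.
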